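(* Let $n=2m+1\ge3$, $I\subset\{0,\dots,m\}$ nonempty, $d\in\mathbb Z$, and let $(v_i)_{i\in n\mathbb Z\pm I}$ be a $d$-face of type $I$ with $\mu_i=v_i-\omega_i$. Let $i\in I$ and $\mu\in\{\mu_i,\mu_{-i}\}$, and suppose that $\mu(j)+\mu(j^* )=d$ holds for all $j\in A_i$, or for all $j\in B_i$. Then $\mu$ is self-dual, i.e. $\mu+\mu^*=\mathbf d$ (equivalently $\mu_i=\mu_{-i}$).
   Context: For $v\in\mathbb Z^n$ write $v(j)$ for its $j$-th entry, $\Sigma v$ for the sum of its entries, $v^*$ for the vector with $v^*(j)=v(n+1-j)$, $\mathbf d=(d,\dots,d)$, and $v\ge w$ if $v(j)\ge w(j)$ for all $j$; $j^*=n+1-j$, $A_i=\{1,\dots,i\}\cup\{i^*,\dots,n\}$, $B_i=\{i+1,\dots,n-i\}$. The index set $n\mathbb Z\pm I$ is the set of integers congruent mod $n$ to an element of $I\cup(-I)$. A $d$-face of type $I$ is a family $(v_i)_{i\in n\mathbb Z\pm I}$ of vectors in $\mathbb Z^n$ with: (F1) $v_{i+n}=v_i-\mathbf 1$; (F2) $v_i\ge v_j$ whenever $i\le j$; (F3) $\Sigma v_i-\Sigma v_j=j-i$; (F4) $v_i+v_{-i}^*=\mathbf d$, for all indices $i,j$. For $i=nb+c$ with $b\in\mathbb Z$, $0\le c<n$, $\omega_i=((-1)^{(c)},0^{(n-c)})-\mathbf b$, where $(x^{(p)},y^{(q)})$ denotes $x$ repeated $p$ times followed by $y$ repeated $q$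 times. *)

From mathcomp Require Import all_boot all_order all_algebra.
Set Implicit Arguments. Unset Strict Implicit. Unset Printing Implicit Defensive.
Import Order.TTheory GRing.Theory Num.Theory.
Local Open Scope ring_scope.

(* A vector of Z^n is a function nat -> int, only entries 1..n matter. *)
Definition vec := nat -> int.

Definition in_idx (n m : nat) (I : {set 'I_m.+1}) (k : int) : Prop :=
  exists2 i : 'I_m.+1, i \in I &
    ((k == (nat_of_ord i)%:Z %[mod n%:Z])%Z || (k == - (nat_of_ord i)%:Z %[mod n%:Z])%Z).

Definition vsum (n : nat) (v : vec) : int := \sum_(1 <= j < n.+1) v j.

(* omega_i for i = n b + c, 0 <= c < n : ((-1)^(c), 0^(n-c)) - b *)
Definition omega (n : nat) (i : int) : vec :=
  fun j => (if (j <= `|(i %% n%:Z)%Z|)%N then -1 else 0) - (i %/ n%:Z)%Z.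

Definition face (n m : nat) (I : {set 'I_m.+1}) (d : int) (v : int -> vec) : Prop :=
  [/\ (* F1 *) (forall i, in_idx n I i -> forall j, (1 <= j <= n)%N ->
                  v (i + n%:Z) j = v i j - 1),
      (* F2 *) (forall i k, in_idx n I i -> in_idx n I k -> i <= k ->
                  forall j, (1 <= j <= n)%N -> v k j <= v i j),
      (* F3 *) (forall i k, in_idx n I i -> in_idx n I k ->
                  vsum n (v i) - vsum n (v k) = k - i) &
      (* F4 *) (forall i, in_idx n I i -> forall j, (1 <= j <= n)%N ->
                  v i j + v (- i) (n.+1 - j)%N = d)].

Definition mu_of (n : nat) (v : int -> vec) (i : int) : vec :=
  fun j => v i j - omega n i j.

Definition inA (n i j : nat) : bool := (1 <= j <= n)%N && ((j <= i)%N || (n.+1 - i <= j)%N).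
Definition inB (n i j : nat) : bool := (i.+1 <= j <= n - i)%N.

From mathcomp Require Import all_boot all_order all_algebra.
From mathcomp Require Import zify.
Set Implicit Arguments. Unset Strict Implicit. Unset Printing Implicit Defensive.
Import Order.TTheory GRing.Theory Num.Theory.
Local Open Scope ring_scope.

(* Write c for i and let gap j := v_{-c}(j) - v_c(j).  By (F2) and (F1),
   v_c <= v_{-c} <= v_{c-n} = v_c + 1, so gap takes values in {0, 1}, and by
   (F3) it sums to 2c, the size of A_c.  Via (F4) and the shape of omega_{+-c},
   self-duality of mu_{+-c} at j says exactly that gap j = [j \in A_c].  If this
   holds on A_c, then gap >= [. \in A_c] everywhere; if it holds on B_c, the
   complement of A_c, then gap <= [. \in A_c] everywhere.  Either way two
   comparable functions with equal sums coincide. *)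

Lemma eq_of_le_sum (R : numDomainType) (T : eqType) (r : seq T) (F G : T -> R) :
  (forall x, x \in r -> F x <= G x) ->
  \sum_(x <- r) F x = \sum_(x <- r) G x -> forall x, x \in r -> F x = G x.
Proof.
move=> leFG /eqP; rewrite eq_sym -subr_eq0 -sumrB.
rewrite big_seq_cond psumr_eq0 => [/allP eq0 x xr|x /andP[xr _]]; last first.
  by rewrite subr_ge0 leFG.
by apply/eqP; rewrite eq_sym -subr_eq0; move: (eq0 x xr); rewrite xr.
Qed.

Lemma omega_nat n c j : (c < n)%N -> omega n c%:Z j = if (j <= c)%N then -1 else 0.
Proof.
by move=> ltcn; rewrite /omega modz_small ?divz_small ?subr0 //; apply/andP; split; lia.
Qed.

Lemma omega_oppn n c j : (c < n)%N -> (1 <= j <= n)%N ->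
  omega n (- c%:Z) j = if (n.+1 - c <= j)%N then 1 else 0.
Proof.
move=> ltcn hj; case: c ltcn => [|c] ltcn.
  by rewrite oppr0 omega_nat //; case: ifP; case: ifP => //; lia.
have -> : - (c.+1)%:Z = (-1) * n%:Z + (n - c.+1)%N%:Z by lia.
have n_neq0 : n%:Z != 0 by lia.
rewrite /omega modzMDl divzMDl // modz_small ?divz_small; try (apply/andP; split; lia).
by case h1: (j <= _)%N; case h2: (n.+1 - c.+1 <= j)%N; lia.
Qed.

Lemma in_idx_ord n m (I : {set 'I_m.+1}) (i : 'I_m.+1) : i \in I ->
  [/\ in_idx n I i%:Z, in_idx n I (- i%:Z) & in_idx n I (i%:Z - n%:Z)].
Proof.
move=> iI; split; exists i => //; rewrite ?eqxx ?orbT //.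
by rewrite eqz_mod_dvd addrAC subrr add0r dvdzE abszN dvdnn.
Qed.

Lemma sum_inA n c : (2 * c <= n)%N -> \sum_(1 <= j < n.+1) (inA n c j)%:Z = (2 * c)%:Z.
Proof.
move=> le2cn; rewrite /inA.
suff -> : forall N, (N <= n)%N ->
    \sum_(1 <= j < N.+1) ((1 <= j <= n) && ((j <= c) || (n.+1 - c <= j)))%N%:Z
    = (minn N c)%:Z + (N + c - n)%N%:Z by lia.
elim=> [|N IH] leNn; first by rewrite big_geq //; lia.
rewrite big_nat_recr //= IH ?(ltnW leNn) // leNn /=.
by case h1: (N.+1 <= c)%N; case h2: (n.+1 - c <= N.+1)%N => /=; lia.
Qed.

Section FaceGap.

Variables (n m : nat) (I : {set 'I_m.+1}) (d : int) (v : int -> vec).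
Hypothesis hface : face n I d v.
Variable i : 'I_m.+1.
Hypotheses (iI : i \in I) (lt2in : (2 * i < n)%N).

Definition face_gap j := v (- i%:Z) j - v i%:Z j.

Lemma face_gap_ge0 j : (1 <= j <= n)%N -> 0 <= face_gap j.
Proof.
have [_ F2 _ _] := hface; have [Ii Ii' _] := in_idx_ord n iI.
by move=> hj; rewrite subr_ge0; apply: F2 => //; lia.
Qed.

Lemma face_gap_le1 j : (1 <= j <= n)%N -> face_gap j <= 1.
Proof.
have [F1 F2 _ _] := hface; have [_ Ii' Iin] := in_idx_ord n iI.
move=> hj; have := F1 _ Iin j hj; rewrite subrK => shift.
have : v (- i%:Z) j <= v (i%:Z - n%:Z) j by apply: F2 => //; lia.
rewrite /face_gap; lia.
Qed.

Lemma sum_face_gap : \sum_(1 <= j < n.+1) face_gap j = (2 * i)%:Z.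
Proof.
have [_ _ F3 _] := hface; have [Ii Ii' _] := in_idx_ord n iI.
by rewrite sumrB; have := F3 _ _ Ii' Ii; rewrite /vsum => ->; lia.
Qed.

Lemma self_dual_at_iff (s : bool) j : (1 <= j <= n)%N ->
  let mu := mu_of n v (if s then i%:Z else - i%:Z) in
  mu j + mu (n.+1 - j)%N = d <-> face_gap j = (inA n i j)%:Z.
Proof.
have [_ _ _ F4] := hface; have [Ii Ii' _] := in_idx_ord n iI.
move=> hj /=; have hj' : (1 <= n.+1 - j <= n)%N by lia.
have := F4 _ Ii j hj; have := F4 _ Ii' j hj; rewrite opprK.
have ltin : (i < n)%N by lia.
rewrite /mu_of /face_gap /inA hj /=.
case: s; rewrite ?omega_nat ?omega_oppn //;
  case h1: (j <= i)%N; case h2: (n.+1 - i <= j)%N;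
  case h3: (n.+1 - j <= i)%N; case h4: (n.+1 - i <= n.+1 - j)%N => /=; lia.
Qed.

Lemma face_gap_eq_inA_of_onA :
  (forall j, inA n i j -> face_gap j = 1) ->
  forall j, (1 <= j <= n)%N -> face_gap j = (inA n i j)%:Z.
Proof.
move=> gapA; have le_inA_gap j : j \in index_iota 1 n.+1 -> (inA n i j)%:Z <= face_gap j.
  rewrite mem_index_iota => hj; case hA: (inA n i j); first by rewrite gapA.
  exact: face_gap_ge0.
move=> j hj; symmetry; apply: (eq_of_le_sum le_inA_gap); last by rewrite mem_index_iota.
by rewrite sum_face_gap sum_inA //; lia.
Qed.

Lemma face_gap_eq_inA_of_onB :
  (forall j, inB n i j -> face_gap j = 0) ->
  forall j, (1 <= j <= n)%N -> face_gap j = (inA n i j)%:Z.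
Proof.
move=> gapB; have le_gap_inA j : j \in index_iota 1 n.+1 -> face_gap j <= (inA n i j)%:Z.
  rewrite mem_index_iota => hj; case hA: (inA n i j); first exact: face_gap_le1.
  by rewrite gapB //; move: hA; rewrite /inA /inB hj /=; lia.
move=> j hj; apply: (eq_of_le_sum le_gap_inA); last by rewrite mem_index_iota.
by rewrite sum_face_gap sum_inA //; lia.
Qed.

End FaceGap.

Theorem lemma5p3p6 (m : nat) (I : {set 'I_m.+1}) (d : int) (v : int -> vec)
  (hm : (1 <= m)%N) (hI : I != set0) (hface : face (2 * m).+1 I d v)
  (i : 'I_m.+1) (hi : i \in I) (s : bool) :
  let n := (2 * m).+1 in
  let mu := mu_of n v (if s then (nat_of_ord i)%:Z else - (nat_of_ord i)%:Z) in
  (forall j, inA n i j -> mu j + mu (n.+1 - j)%N = d) \/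
  (forall j, inB n i j -> mu j + mu (n.+1 - j)%N = d) ->
  forall j, (1 <= j <= n)%N -> mu j + mu (n.+1 - j)%N = d.
Proof.
move=> n mu.
have lt2in : (2 * i < n)%N by have := ltn_ord i; rewrite /n; lia.
have self_dual_at := self_dual_at_iff hface hi lt2in s.
move=> [onA | onB] j hj; apply/self_dual_at => //.
- apply: (face_gap_eq_inA_of_onA hface hi lt2in) => // k hk.
  have hk' : (1 <= k <= n)%N by move: hk => /andP[].
  by move/(self_dual_at k hk'): (onA k hk) => ->; rewrite hk.
- apply: (face_gap_eq_inA_of_onB hface hi lt2in) => // k hk.
  have hk' : (1 <= k <= n)%N by move: hk; rewrite /inB; lia.
  move/(self_dual_at k hk'): (onB k hk) => ->.
  suff -> : inA n i k = false by [].
  by apply/negbTE; move: hk; rewrite /inA /inB; lia.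
Qed.
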